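(* For any finite nonsolvable group $G$, there exists a finite non-abelian simple group $H$ with $|\mathrm{Solv}(G)| \geq |\mathrm{Solv}(H)|$.
   Context: For a finite group $G$ and $x \in G$, the solvabilizer of $x$ in $G$ is $\mathrm{Sol}_G(x) = \{y \in G : \langle x, y \rangle \text{ is solvable}\}$. $\mathrm{Solv}(G) = \{\mathrm{Sol}_G(x) : x \in G\}$ is the set of distinct solvabilizers of elements of $G$. *)

From mathcomp Require Import all_boot all_fingroup all_solvable.
Set Implicit Arguments. Unset Strict Implicit. Unset Printing Implicit Defensive.
Local Open Scope group_scope.

Definition solvabilizer (gT : finGroupType) (G : {set gT}) (x : gT) : {set gT} :=
  [set y in G | solvable <<[set x; y]>>].

Definition Solv (gT : finGroupType) (G : {set gT}) : {set {set gT}} :=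
  [set solvabilizer G x | x in G].

(* Solv can only shrink when passing to a subgroup (restrict each solvabilizer
   to it) and to a quotient in which solvability of two-generated subgroups is
   unchanged (map each solvabilizer through the coset map).  A minimal
   nonsolvable subgroup K of G has a maximal normal subgroup N, and K / N is
   simple and nonsolvable, hence non-abelian.  Every two-generated subgroup of
   K is either K itself or proper, hence solvable, so its solvability is the
   same in K and in K / N. *)

From mathcomp Require Import all_boot all_fingroup all_solvable.

Set Implicit Arguments.
Unset Strict Implicit.
Unset Printing Implicit Defensive.

Local Open Scope group_scope.

Section Solvabilizers.

Variable gT : finGroupType.
Implicit Types (G K N : {group gT}) (x y : gT).

Lemma solvabilizer_subgroup K G x :
  K \subset G -> solvabilizer K x = solvabilizer G x :&: K.
Proof.
move=> sKG; apply/setP=> y; rewrite !inE.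
by case yK: (y \in K); rewrite ?andbF // (subsetP sKG y yK) andbT.
Qed.

Lemma card_Solv_subgroup K G : K \subset G -> #|Solv K| <= #|Solv G|.
Proof.
move=> sKG.
have sub_img: Solv K \subset (fun S => S :&: K) @: Solv G.
  apply/subsetP=> _ /imsetP[x xK ->]; apply/imsetP.
  exists (solvabilizer G x); last exact: solvabilizer_subgroup.
  by apply/imsetP; exists x; rewrite ?(subsetP sKG).
exact: leq_trans (subset_leq_card sub_img) (leq_imset_card _ _).
Qed.

Lemma quotient_gen_set2 N x y :
  x \in 'N(N) -> y \in 'N(N) ->
  <<[set x; y]>> / N = <<[set coset N x; coset N y]>>.
Proof.
move=> xN yN; rewrite quotient_gen; last by apply/subsetP=> z /set2P[]->.
by rewrite quotientU !quotient_set1.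
Qed.

Section QuotientPreservingSolvability.

Variables K N : {group gT}.
Hypothesis nNK : K \subset 'N(N).
Hypothesis sol_quo_gen2 :
  {in K &, forall x y, solvable (<<[set x; y]>> / N) = solvable <<[set x; y]>>}.

Lemma solvabilizer_quotient x :
  x \in K -> solvabilizer (K / N) (coset N x) = coset N @: solvabilizer K x.
Proof.
have solE y z : y \in K -> z \in K ->
    solvable <<[set coset N y; coset N z]>> = solvable <<[set y; z]>>.
  by move=> yK zK; rewrite -quotient_gen_set2 ?(subsetP nNK) ?sol_quo_gen2.
move=> xK; apply/setP=> v; apply/idP/idP.
- rewrite inE => /andP[/morphimP[y _ yK ->] solv].
  by apply/imsetP; exists y; rewrite // inE yK -solE.
- case/imsetP=> y /setIdP[yK soly] ->.
  by rewrite inE mem_quotient //= solE.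
Qed.

Lemma card_Solv_quotient : #|Solv (K / N)| <= #|Solv K|.
Proof.
have sub_img: Solv (K / N) \subset (fun S : {set gT} => coset N @: S) @: Solv K.
  apply/subsetP=> _ /imsetP[_ /morphimP[x _ xK ->] ->].
  by apply/imsetP; exists (solvabilizer K x); rewrite ?solvabilizer_quotient ?imset_f.
exact: leq_trans (subset_leq_card sub_img) (leq_imset_card _ _).
Qed.

End QuotientPreservingSolvability.

Section MinimalNonsolvable.

Variable K : {group gT}.
Hypothesis minK : [min K of M | ~~ solvable M].

Lemma minnsol_proper_sol (M : {group gT}) : M \proper K -> solvable M.
Proof.
case/mingroupP: minK => _ minM ltMK; apply/idPn=> nsolM.
by move: (ltMK); rewrite (minM M nsolM (proper_sub ltMK)) properxx.
Qed.

Lemma minnsol_quotient_gen2 N :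
  ~~ solvable (K / N) ->
  {in K &, forall x y, solvable (<<[set x; y]>> / N) = solvable <<[set x; y]>>}.
Proof.
case/mingroupP: minK => nsolK _ nsolKN x y xK yK.
have sXK: <<[set x; y]>> \subset K.
  by rewrite gen_subG; apply/subsetP=> z /set2P[]->.
have [eqXK | neXK] := eqVneq <<[set x; y]>> K.
  by rewrite eqXK (negbTE nsolK) (negbTE nsolKN).
have solX : solvable <<[set x; y]>>.
  by apply: minnsol_proper_sol; rewrite properEneq neXK.
by rewrite solX quotient_sol.
Qed.

Lemma minnsol_maxnormal_quotient_nsol N :
  maxnormal N K K -> ~~ solvable (K / N).
Proof.
move=> maxN; case/mingroupP: minK => nsolK _.
apply: contra nsolK => solKN.
by rewrite (series_sol (maxnormal_normal maxN)) solKN andbT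
           minnsol_proper_sol ?(maxnormal_proper maxN).
Qed.

End MinimalNonsolvable.

End Solvabilizers.

Theorem lemma5p2 (gT : finGroupType) (G : {group gT}) :
  ~~ solvable G ->
  exists (hT : finGroupType) (H : {group hT}),
    [/\ simple H, ~~ abelian H & #|Solv H| <= #|Solv G|].
Proof.
move=> nsolG.
have [K minK sKG] := mingroup_exists (gP := fun M => ~~ solvable M) nsolG.
have ntK : K :!=: 1.
  by apply: contraNneq (mingroupp minK) => ->; apply: abelian_sol (abelian1 _).
have [N maxN] := ex_maxnormal_ntrivg ntK.
have nsNK := maxnormal_normal maxN.
have nsolKN := minnsol_maxnormal_quotient_nsol minK maxN.
exists (coset_of N), (K / N)%G; split.
- by rewrite quotient_simple.
- by apply: contra nsolKN; apply: abelian_sol.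
- apply: leq_trans (card_Solv_subgroup sKG).
  exact: card_Solv_quotient (normal_norm nsNK) (minnsol_quotient_gen2 minK nsolKN).
Qed.
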